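(* Let $n\ge 2$ and $1\le m\le n$ be integers, and let $\mathbf g_1,\dots,\mathbf g_n\in\mathbb R^d$ be arbitrary vectors (the per-example negative gradients $\mathbf g_i=-\nabla_{\mathbf w} f_i(\mathbf w)$ at a fixed parameter $\mathbf w$). Put $\mathbf g=\frac1n\sum_{i=1}^n \mathbf g_i$ and assume $\mathbf g\neq 0$. Let $\mathbb I$ be a subset of $\{1,\dots,n\}$ of size $m$ drawn uniformly at random among all $\binom nm$ such subsets, and let $\hat{\mathbf g}=\frac1m\sum_{i\in\mathbb I}\mathbf g_i$. Let $\gamma=\max_{i,j\in\{1,\dots,n\}}|\langle \mathbf g_i,\mathbf g_j\rangle|$. Then $$0\le \mathbb E\|\hat{\mathbf g}\|-\|\mathbf g\|\le \frac{2(n-m)}{m(n-1)}\cdot\frac{\gamma}{\mathbb E\|\hat{\mathbf g}\|+\|\mathbf g\|}\le \frac{(n-m)\gamma}{m(n-1)\|\mathbf g\|},$$ $$\mathrm{Var}(\|\hat{\mathbf g}\|)\le \frac{2(n-m)}{m(n-1)}\gamma,$$ and consequently $$\frac{\sqrt{\mathrm{Var}(\|\hat{\mathbf g}\|)}}{\mathbb E\|\hat{\mathbf g}\|}\le\sqrt{\frac{2(n-m)}{m(n-1)}\cdot\frac{\gamma}{\|\mathbf g\|^2}}.$$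
   Context: $\|\cdot\|$ is the Euclidean norm and $\langle\cdot,\cdot\rangle$ the Euclidean inner product on $\mathbb R^d$. Expectation and variance are over the random choice of $\mathbb I$. *)

(* the statement is purely algebraic (sums, square roots,
   order), so it is stated for an arbitrary real closed field R (which
   includes the real numbers). *)
From HB Require Import structures.
From mathcomp Require Import all_boot all_order all_algebra.
Set Implicit Arguments. Unset Strict Implicit. Unset Printing Implicit Defensive.
Import Order.TTheory GRing.Theory Num.Theory.
Local Open Scope ring_scope.

Section Defs.
Variable R : rcfType.

Definition dotp (d : nat) (u v : 'rV[R]_d) : R := \sum_(k < d) u 0 k * v 0 k.
Definition enorm (d : nat) (u : 'rV[R]_d) : R := Num.sqrt (dotp u u).

Definition gmean (d n : nat) (g : 'I_n -> 'rV[R]_d) : 'rV[R]_d :=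
  (n%:R)^-1 *: \sum_(i < n) g i.

Definition gbatch (d n m : nat) (g : 'I_n -> 'rV[R]_d) (I : {set 'I_n}) : 'rV[R]_d :=
  (m%:R)^-1 *: \sum_(i in I) g i.

Definition Exp (n m : nat) (f : {set 'I_n} -> R) : R :=
  ('C(n, m)%:R)^-1 * \sum_(I : {set 'I_n} | #|I| == m) f I.

Definition Var (n m : nat) (f : {set 'I_n} -> R) : R :=
  @Exp n m (fun I => (f I - @Exp n m f) ^+ 2).

Definition gammaG (d n : nat) (g : 'I_n -> 'rV[R]_d) : R :=
  \big[Num.max/0]_(ij : 'I_n * 'I_n) `|dotp (g ij.1) (g ij.2)|.

End Defs.
Arguments Exp {R} n m f.
Arguments Var {R} n m f.

From HB Require Import structures.
From mathcomp Require Import all_boot all_order all_algebra.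
From mathcomp Require Import zify ring lra.
Set Implicit Arguments.
Unset Strict Implicit.
Unset Printing Implicit Defensive.

Import Order.TTheory GRing.Theory Num.Theory.
Local Open Scope ring_scope.

(* Counting the m-subsets that contain a given index, or a given pair of
   distinct indices, computes the second moment of the mini-batch mean exactly:
     E|ĝ|^2 - |g|^2 = (n - m)/(m (n - 1)) * (1/n sum_i |g_i|^2 - |g|^2),
   which is at most (n - m) gamma / (m (n - 1)).  Since E<ĝ, g> = |g|^2,
   Cauchy-Schwarz gives |g| <= E|ĝ|, and Var|ĝ| + (E|ĝ|)^2 - |g|^2 is again
   E|ĝ|^2 - |g|^2; every claimed bound is elementary algebra from these two
   facts. *)

Lemma card_draws_supset (n m : nat) (J : {set 'I_n}) : (#|J| <= m)%N ->
  #|[set I : {set 'I_n} | (J \subset I) && (#|I| == m)]| = 'C(n - #|J|, m - #|J|).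
Proof.
move=> leJm; have cardJC : #|~: J| = (n - #|J|)%N.
  by have := cardsC J; rewrite card_ord; lia.
rewrite -cardJC -cards_draws.
rewrite -(@card_in_imset _ _ (fun B => B :|: J)
  [set A : {set 'I_n} | A \subset ~: J & #|A| == (m - #|J|)%N]); last first.
  move=> B1 B2; rewrite !inE => /andP[sB1 _] /andP[sB2 _] eqB.
  move: sB1 sB2; rewrite -!disjoints_subset => sB1 sB2.
  by rewrite -(setDidPl sB1) -(setDidPl sB2) -[B1 :\: J]setU0 -[B2 :\: J]setU0
    -(setDv J) -!setDUl eqB.
apply: eq_card => I; rewrite !inE; apply/andP/imsetP.
  case=> sJI /eqP cardI; exists (I :\: J).
    by rewrite inE subsetDr cardsD (setIidPr sJI) cardI eqxx.
  by rewrite setUC -{1}(setID I J) (setIidPr sJI).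
case=> B; rewrite inE => /andP[sBJ /eqP cardB] ->; split; first exact: subsetUr.
rewrite cardsU cardB; suff -> : B :&: J = set0 by rewrite cards0; apply/eqP; lia.
by apply/disjoint_setI0; rewrite disjoints_subset.
Qed.

Lemma card_draws_supset0 (n m : nat) (J : {set 'I_n}) : (m < #|J|)%N ->
  #|[set I : {set 'I_n} | (J \subset I) && (#|I| == m)]| = 0%N.
Proof.
move=> ltmJ; apply/eqP; rewrite cards_eq0; apply/eqP/setP => I; rewrite !inE.
by apply/negbTE/andP => -[/subset_leq_card leJI /eqP cardI]; lia.
Qed.

Section InnerProduct.
Variables (R : rcfType) (d : nat).
Implicit Types (u v : 'rV[R]_d).

Lemma dotpC u v : dotp u v = dotp v u.
Proof. by apply: eq_bigr => k _; rewrite mulrC. Qed.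

Lemma dotpZl a u v : dotp (a *: u) v = a * dotp u v.
Proof. by rewrite /dotp mulr_sumr; apply: eq_bigr => k _; rewrite mxE mulrA. Qed.

Lemma dotp_suml (I : finType) (P : pred I) (u : I -> 'rV[R]_d) v :
  dotp (\sum_(i | P i) u i) v = \sum_(i | P i) dotp (u i) v.
Proof. by rewrite /dotp exchange_big; apply: eq_bigr => k _; rewrite summxE mulr_suml. Qed.

Lemma dotpZ_sum (I : finType) (P : pred I) (u : I -> 'rV[R]_d) a :
  dotp (a *: \sum_(i | P i) u i) (a *: \sum_(i | P i) u i)
  = a ^+ 2 * \sum_(i | P i) \sum_(j | P j) dotp (u i) (u j).
Proof.
rewrite dotpZl dotp_suml expr2 -mulrA; congr (_ * _); rewrite mulr_sumr.
apply: eq_bigr => i _; rewrite dotpC dotpZl dotp_suml.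
by congr (_ * _); apply: eq_bigr => j _; apply: dotpC.
Qed.

Lemma dotp_ge0 u : 0 <= dotp u u.
Proof. by apply: sumr_ge0 => k _; rewrite -expr2 sqr_ge0. Qed.

Lemma dotp_gt0 u : u != 0 -> 0 < dotp u u.
Proof.
move=> u_neq0; rewrite lt_def dotp_ge0 andbT; apply: contra u_neq0 => /eqP u0.
apply/eqP/matrixP => i k; rewrite ord1 mxE.
have : u 0 k * u 0 k == 0.
  by apply/eqP/(psumr_eq0P _ u0) => // l _; rewrite -expr2 sqr_ge0.
by rewrite mulf_eq0 orbb => /eqP.
Qed.

Lemma sqr_enorm u : enorm u ^+ 2 = dotp u u.
Proof. exact/sqr_sqrtr/dotp_ge0. Qed.

Lemma enorm_gt0 u : u != 0 -> 0 < enorm u.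
Proof. by move/dotp_gt0; rewrite sqrtr_gt0. Qed.

Lemma lagrange_identity u v :
  \sum_k \sum_l (u 0 k * v 0 l - u 0 l * v 0 k) ^+ 2
  = 2 * (dotp u u * dotp v v - dotp u v ^+ 2).
Proof.
have prod_sum (a b : 'I_d -> R) :
    (\sum_k a k) * (\sum_l b l) = \sum_k \sum_l a k * b l.
  by rewrite mulr_suml; apply: eq_bigr => k _; rewrite mulr_sumr.
have -> : 2 * (dotp u u * dotp v v - dotp u v ^+ 2) =
    dotp u u * dotp v v + dotp v v * dotp u u - 2 * (dotp u v * dotp u v).
  by ring.
rewrite /dotp !prod_sum.
rewrite -big_split mulr_sumr -sumrB; apply: eq_bigr => k _.
by rewrite -big_split mulr_sumr -sumrB; apply: eq_bigr => l _ /=; ring.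
Qed.

Lemma dotp_le_enorm u v : dotp u v <= enorm u * enorm v.
Proof.
have : dotp u v ^+ 2 <= dotp u u * dotp v v.
  rewrite -subr_ge0 -(@pmulr_rge0 _ 2) // -lagrange_identity.
  by do 2![apply: sumr_ge0 => ? _]; rewrite sqr_ge0.
rewrite /enorm -sqrtrM ?dotp_ge0 // => /ler_wsqrtr; rewrite sqrtr_sqr.
exact: le_trans (ler_norm _).
Qed.

End InnerProduct.

Lemma ler_norm_dotp_gammaG (R : rcfType) d n (g : 'I_n -> 'rV[R]_d) i j :
  `|dotp (g i) (g j)| <= gammaG g.
Proof. exact: (le_bigmax _ (fun ij : 'I_n * 'I_n => `|dotp (g ij.1) (g ij.2)|) (i, j)). Qed.

Section Draws.
Variables (R : rcfType) (n m : nat).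
Hypotheses (m_gt0 : (0 < m)%N) (leq_mn : (m <= n)%N).

(* p1 and p2 are the probabilities that a uniform m-subset contains a given
   index, resp. a given pair of distinct indices. *)
Let C : R := 'C(n, m)%:R.
Let p1 : R := m%:R / n%:R.
Let p2 : R := m%:R * (m%:R - 1) / (n%:R * (n%:R - 1)).

Let n_gt0 : (0 < n)%N. Proof. exact: leq_trans leq_mn. Qed.

Let natr_pred k : (0 < k)%N -> k%:R - 1 = k.-1%:R :> R.
Proof. by move=> k_gt0; rewrite -subn1 natrB. Qed.

Lemma card_draws_supset1 (i : 'I_n) :
  #|[set I : {set 'I_n} | ([set i] \subset I) && (#|I| == m)]|%:R = p1 * C.
Proof.
rewrite card_draws_supset cards1 // /p1 mulrAC; apply: (canRL (mulfK _)).
  by rewrite pnatr_eq0 -lt0n.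
by rewrite !subn1 -!natrM mulnC; case: m m_gt0 => // k _; rewrite mul_bin_diag.
Qed.

Lemma card_draws_supset2 (i j : 'I_n) : i != j ->
  #|[set I : {set 'I_n} | ([set i; j] \subset I) && (#|I| == m)]|%:R = p2 * C.
Proof.
move=> neq_ij; have n_gt1 : (1 < n)%N.
  by rewrite -(card_ord n); apply: leq_trans (max_card [set i; j]); rewrite cards2 neq_ij.
have nn1 : n%:R * (n%:R - 1) != 0 :> R.
  by rewrite mulf_neq0 ?pnatr_eq0 -?lt0n // subr_eq0 pnatr_eq1 gtn_eqF.
rewrite /p2 /C mulrAC; apply: (canRL (mulfK nn1)).
(* For m = 1 the count is 0, not 'C(n - 2, m - 2) with truncated m - 2. *)
have [->|m_gt1] := eqVneq m 1%N.
  by rewrite card_draws_supset0 ?cards2 ?neq_ij // subrr mulr0 !mul0r.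
have [k def_m] : exists k, m = k.+2 by exists (m - 2)%N; lia.
rewrite card_draws_supset cards2 neq_ij; last by lia.
rewrite !natr_pred ?def_m // -!natrM; congr _%:R.
rewrite /= subn2 mulnC -mulnA mul_bin_diag mulnCA mul_bin_diag.
by rewrite !subSS subn0 mulnA (mulnC k.+1).
Qed.

Lemma sum_draws_sum (F : 'I_n -> R) :
  \sum_(I : {set 'I_n} | #|I| == m) \sum_(i in I) F i = C * (p1 * \sum_i F i).
Proof.
under eq_bigr do rewrite big_mkcond /=.
rewrite exchange_big !mulr_sumr; apply: eq_bigr => i _ /=.
rewrite -big_mkcondr sumr_const -mulr_natl mulrA (mulrC C) -(card_draws_supset1 i).
by congr (_%:R * _); apply: eq_card => I; rewrite !inE sub1set andbC.
Qed.

Lemma sum_draws_sum2 (F : 'I_n -> 'I_n -> R) :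
  \sum_(I : {set 'I_n} | #|I| == m) \sum_(i in I) \sum_(j in I) F i j
  = C * (p2 * \sum_i \sum_j F i j + (p1 - p2) * \sum_i F i i).
Proof.
have -> : \sum_(I : {set 'I_n} | #|I| == m) \sum_(i in I) \sum_(j in I) F i j =
    \sum_i \sum_j F i j * (if i == j then p1 * C else p2 * C).
  under eq_bigr do rewrite big_mkcond /=.
  rewrite exchange_big; apply: eq_bigr => i _ /=; rewrite -big_mkcondr /=.
  under eq_bigr do rewrite big_mkcond /=.
  rewrite exchange_big; apply: eq_bigr => j _ /=.
  rewrite -big_mkcondr sumr_const -mulr_natr; congr (_ * _).
  case: eqVneq => [<-|neq_ij].
    rewrite -(card_draws_supset1 i); congr _%:R; apply: eq_card => I.
    by rewrite unfold_in !inE sub1set; case: (i \in I); case: (#|I| == m).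
  rewrite -(card_draws_supset2 neq_ij); congr _%:R; apply: eq_card => I.
  rewrite unfold_in !inE subUset !sub1set.
  by case: (i \in I); case: (j \in I); case: (#|I| == m).
rewrite mulrDr (mulrA C p2) (mulrA C (p1 - p2)) !mulr_sumr -big_split.
apply: eq_bigr => i _ /=; rewrite (bigD1 i) //= eqxx [in RHS](bigD1 i) //=.
under eq_bigr => j /negbTE neq_ji do rewrite eq_sym neq_ji.
by rewrite -mulr_suml; ring.
Qed.

End Draws.

Section Expectation.
Variables (R : rcfType) (n m : nat).
Hypothesis leq_mn : (m <= n)%N.
Implicit Types f h : {set 'I_n} -> R.

Lemma eq_Exp f h : f =1 h -> Exp n m f = Exp n m h.
Proof. by move=> eq_fh; rewrite /Exp; congr (_ * _); apply: eq_bigr. Qed.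

Lemma ExpB f h : Exp n m (fun I => f I - h I) = Exp n m f - Exp n m h.
Proof. by rewrite /Exp sumrB mulrBr. Qed.

Lemma ExpZ a f : Exp n m (fun I => a * f I) = a * Exp n m f.
Proof. by rewrite /Exp -mulr_sumr mulrCA. Qed.

Lemma Exp_const (c : R) : Exp n m (fun=> c) = c.
Proof.
rewrite /Exp (eq_bigl (fun I => I \in [set I : {set 'I_n} | #|I| == m])) => [|I].
  rewrite sumr_const card_draws card_ord -[c *+ _]mulr_natl mulrA mulVf ?mul1r //.
  by rewrite pnatr_eq0 -lt0n bin_gt0.
by rewrite inE.
Qed.

Lemma ler_Exp f h : (forall I, f I <= h I) -> Exp n m f <= Exp n m h.
Proof.
by move=> le_fh; rewrite ler_wpM2l ?invr_ge0 ?ler0n //; apply: ler_sum.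
Qed.

Lemma Var_ge0 f : 0 <= Var n m f.
Proof.
by rewrite mulr_ge0 ?invr_ge0 ?ler0n //; apply: sumr_ge0 => I _; rewrite sqr_ge0.
Qed.

Lemma Var_Exp2 f : Var n m f = Exp n m (fun I => f I ^+ 2) - Exp n m f ^+ 2.
Proof.
rewrite /Var (@eq_Exp _ (fun I => f I ^+ 2 - (2 * Exp n m f * f I - Exp n m f ^+ 2))).
  by rewrite !ExpB ExpZ Exp_const; ring.
by move=> I /=; ring.
Qed.

End Expectation.

Section Moments.
Variables (R : rcfType) (d n m : nat) (g : 'I_n -> 'rV[R]_d).
Hypotheses (m_gt0 : (0 < m)%N) (leq_mn : (m <= n)%N).

Let n_gt0 : (0 < n)%N. Proof. exact: leq_trans leq_mn. Qed.
Let n_neq0 : n%:R != 0 :> R. Proof. by rewrite pnatr_eq0 -lt0n. Qed.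
Let m_neq0 : m%:R != 0 :> R. Proof. by rewrite pnatr_eq0 -lt0n. Qed.
Let C_neq0 : 'C(n, m)%:R != 0 :> R. Proof. by rewrite pnatr_eq0 -lt0n bin_gt0. Qed.

Lemma Exp_dotp_gbatch_gmean :
  Exp n m (fun I => dotp (gbatch m g I) (gmean g)) = dotp (gmean g) (gmean g).
Proof.
rewrite /Exp /gbatch; under eq_bigr do rewrite dotpZl dotp_suml.
rewrite -mulr_sumr sum_draws_sum // {3}/gmean dotpZl dotp_suml.
by field; apply/and3P.
Qed.

Lemma enorm_gmean_le_Exp : enorm (gmean g) <= Exp n m (fun I => enorm (gbatch m g I)).
Proof.
have Exp_ge0 : 0 <= Exp n m (fun I => enorm (gbatch m g I)).
  by rewrite -(Exp_const leq_mn (0 : R)); apply: ler_Exp => I; apply: sqrtr_ge0.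
have := sqrtr_ge0 (dotp (gmean g) (gmean g)).
rewrite -/(enorm _) le0r => /orP[/eqP -> //|nG_gt0].
rewrite -(ler_pM2r nG_gt0) -expr2 sqr_enorm -Exp_dotp_gbatch_gmean [leRHS]mulrC -ExpZ.
by apply: ler_Exp => I; rewrite [leRHS]mulrC; apply: dotp_le_enorm.
Qed.

Hypothesis n_gt1 : (1 < n)%N.

Lemma Exp_sqr_enorm_gbatch :
  Exp n m (fun I => enorm (gbatch m g I) ^+ 2) - enorm (gmean g) ^+ 2
  = (n - m)%N%:R / (m%:R * n.-1%:R)
    * ((\sum_i dotp (g i) (g i)) / n%:R - enorm (gmean g) ^+ 2).
Proof.
have n1_neq0 : n%:R - 1 != 0 :> R by rewrite subr_eq0 pnatr_eq1 gtn_eqF.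
rewrite /Exp /gbatch; under eq_bigr do rewrite sqr_enorm dotpZ_sum.
rewrite sqr_enorm /gmean.
rewrite -mulr_sumr sum_draws_sum2 // dotpZ_sum natrB // -subn1 natrB //.
by field; rewrite n_neq0 m_neq0 n1_neq0 C_neq0.
Qed.

Lemma Exp_sqr_enorm_gbatch_le :
  Exp n m (fun I => enorm (gbatch m g I) ^+ 2) - enorm (gmean g) ^+ 2
  <= (n - m)%N%:R / (m%:R * n.-1%:R) * gammaG g.
Proof.
rewrite Exp_sqr_enorm_gbatch ler_wpM2l ?divr_ge0 ?mulr_ge0 ?ler0n //.
have le_mean : (\sum_i dotp (g i) (g i)) / n%:R <= gammaG g.
  rewrite ler_pdivrMr ?ltr0n // mulr_natr.
  apply: (@le_trans _ _ (\sum_(i < n) gammaG g)); last by rewrite sumr_const card_ord.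
  by apply: ler_sum => i _; apply: le_trans (ler_norm _) (ler_norm_dotp_gammaG g i i).
by rewrite lerBlDr (le_trans le_mean) // lerDl sqr_ge0.
Qed.

End Moments.

(* nG, EN and VN stand for |g|, E|ĝ| and Var|ĝ|; the last hypothesis is the
   second-moment bound E|ĝ|^2 - |g|^2 <= k gamma. *)
Lemma mean_var_bounds (R : rcfType) (nG EN VN k gam : R) :
  0 < nG -> nG <= EN -> 0 <= VN -> VN + (EN ^+ 2 - nG ^+ 2) <= k * gam ->
  [/\ 0 <= EN - nG, EN - nG <= 2 * k * (gam / (EN + nG)),
      2 * k * (gam / (EN + nG)) <= k * gam / nG, VN <= 2 * k * gam
    & Num.sqrt VN / EN <= Num.sqrt (2 * k * (gam / nG ^+ 2))].
Proof.
move=> nG_gt0 le_nG_EN VN_ge0 bound.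
have EN_gt0 : 0 < EN := lt_le_trans nG_gt0 le_nG_EN.
have sum_gt0 : 0 < EN + nG by rewrite addr_gt0.
have le_sqr : nG ^+ 2 <= EN ^+ 2 by rewrite lerXn2r // ?nnegrE ltW.
have kgam_ge0 : 0 <= k * gam by lra.
have VN_le : VN <= 2 * k * gam by rewrite -mulrA; lra.
split=> //; first by rewrite subr_ge0.
- rewrite mulrA ler_pdivlMr //.
  have -> : (EN - nG) * (EN + nG) = EN ^+ 2 - nG ^+ 2 by ring.
  by rewrite -mulrA; lra.
- rewrite !mulrA ler_pdivrMr // [leRHS]mulrAC ler_pdivlMr //.
  have : 0 <= k * gam * (EN - nG) by rewrite mulr_ge0 // subr_ge0.
  nra.
have X_ge0 : 0 <= 2 * k * (gam / nG ^+ 2).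
  by rewrite mulrA -(mulrA 2); apply: divr_ge0; rewrite ?sqr_ge0 // mulr_ge0.
rewrite ler_pdivrMr // -[EN in _ * EN](ger0_norm (ltW EN_gt0)) -sqrtr_sqr -sqrtrM //.
apply: ler_wsqrtr; apply: le_trans VN_le _.
have -> : 2 * k * (gam / nG ^+ 2) * EN ^+ 2 = 2 * k * gam * (EN ^+ 2 / nG ^+ 2) by ring.
apply: ler_peMr; first by rewrite -mulrA mulr_ge0.
by rewrite ler_pdivlMr ?exprn_gt0 // mul1r.
Qed.

Theorem theorem1 (R : rcfType) (d n m : nat) (g : 'I_n -> 'rV[R]_d) :
  (2 <= n)%N -> (1 <= m)%N -> (m <= n)%N -> gmean g != 0 ->
  let EN := Exp n m (fun I => enorm (gbatch m g I)) in
  let VN := Var n m (fun I => enorm (gbatch m g I)) in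
  let nG := enorm (gmean g) in
  let c := 2 * (n - m)%N%:R / (m%:R * (n.-1)%:R) in
  [/\ 0 <= EN - nG,
      EN - nG <= c * (gammaG g / (EN + nG)),
      c * (gammaG g / (EN + nG)) <= (n - m)%N%:R * gammaG g / (m%:R * (n.-1)%:R * nG),
      VN <= c * gammaG g
    & Num.sqrt VN / EN <= Num.sqrt (c * (gammaG g / nG ^+ 2))].
Proof.
move=> n_gt1 m_gt0 leq_mn gmean_neq0 EN VN nG c.
pose k : R := (n - m)%N%:R / (m%:R * n.-1%:R).
have -> : c = 2 * k by rewrite /c mulrA.
have -> : (n - m)%N%:R * gammaG g / (m%:R * n.-1%:R * nG) = k * gammaG g / nG.
  by rewrite /k !invfM; ring.
apply: mean_var_bounds.
- exact: enorm_gt0.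
- exact: enorm_gmean_le_Exp.
- exact: Var_ge0.
rewrite /VN Var_Exp2 // addrA subrK.
exact: Exp_sqr_enorm_gbatch_le.
Qed.
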